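(* Let $\mathbb{H}\in\{\mathbb{R},\mathbb{C}\}$, let $A\in\mathbb{H}^{M\times N}$ be deterministic, let $x\in\mathbb{H}^N$, $e^z\in\mathbb{H}^M$, $e^y\in\mathbb{R}^M$ be random vectors, let $f:\mathbb{H}\to\mathbb{R}$ be measurable, and $y=f(Ax+e^z)+e^y$ (entrywise $f$). Let $\mathcal{T}:\mathbb{R}\to\mathbb{R}$ be a measurable preprocessing function applied entrywise, assume $\mathbb{E}[\mathcal{T}(y_m)^2]<\infty$ for all $m$ and $\mathbb{E}[\|x\|_2^4]<\infty$. Define $\overline{\mathcal{T}}(y)=\mathbb{E}[\mathcal{T}(y)]$, $K_x=\mathbb{E}[xx^H]$, $T=\mathbb{E}[(\mathcal{T}(y)-\overline{\mathcal{T}}(y))(\mathcal{T}(y)-\overline{\mathcal{T}}(y))^T]$, assume $T$ is full rank, let $t$ solve $Tt=\mathcal{T}(y)-\overline{\mathcal{T}}(y)$, $V_m=\mathbb{E}[(\mathcal{T}(y_m)-\overline{\mathcal{T}}(y_m))(xx^H-K_x)]$, and $D_y=K_x+\sum_{m=1}^Mt_mV_m$. Let $\hat x\in\mathbb{H}^N$ be a minimizer of $\|D_y-\tilde x\tilde x^H\|_F^2$ over $\tilde x\in\mathbb{H}^N$. Then $$\mathbb{E}\big[\|\hat x\hat x^H-xx^H\|_F^2\big]\le 4\,\mathbb{E}\big[\|D_y-xx^H\|_F^2\big].$$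
   Context: Expectations are taken jointly over $x$, $e^z$, $e^y$; $A$ is deterministic. For $\mathbb{H}=\mathbb{R}$, $H$ denotes transpose. $\|\cdot\|_F$ is the Frobenius norm. *)

From HB Require Import structures.
From mathcomp Require Import all_boot all_order all_algebra.
From mathcomp Require Import all_classical all_reals all_analysis.
From mathcomp Require Import complex.
Set Implicit Arguments. Unset Strict Implicit. Unset Printing Implicit Defensive.
Import Order.TTheory GRing.Theory Num.Theory.
Local Open Scope ring_scope.

Section Defs.
Variable R : realType.
Local Notation C := (complex R).

Definition sqmod (z : C) : R := complex.Re z ^+ 2 + complex.Im z ^+ 2.

Definition adjmx m n (A : 'M[C]_(m, n)) : 'M[C]_(n, m) :=
  (map_mx (@conjc R) A)^T.

Definition frob2 m n (A : 'M[C]_(m, n)) : R :=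
  \sum_(i < m) \sum_(j < n) sqmod (A i j).

Definition outer n (v : 'cV[C]_n) : 'M[C]_n := v *m adjmx v.

(* H = R (realcase = true) viewed inside C, or H = C (realcase = false) *)
Definition inH (realcase : bool) (z : C) : Prop := realcase -> complex.Im z = 0.
Definition inHmx (realcase : bool) m n (A : 'M[C]_(m, n)) : Prop :=
  forall i j, inH realcase (A i j).

Context d (Omega : measurableType d) (P : probability Omega R).

Definition EE (g : Omega -> R) : R := fine (\int[P]_w (g w)%:E)%E.
Definition EC (g : Omega -> C) : C :=
  Complex (EE (fun w => complex.Re (g w))) (EE (fun w => complex.Im (g w))).

Definition rvC (g : Omega -> C) : Prop :=
  measurable_fun setT (fun w => complex.Re (g w)) /\
  measurable_fun setT (fun w => complex.Im (g w)).
Definition rvCmx m n (X : Omega -> 'M[C]_(m, n)) : Prop :=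
  forall i j, rvC (fun w => X w i j).
Definition rvRmx m n (X : Omega -> 'M[R]_(m, n)) : Prop :=
  forall i j, measurable_fun setT (fun w => X w i j).

End Defs.

Definition measurable_cplx (R : realType) (f : complex R -> R) : Prop :=
  measurable_fun setT (fun p : R * R => f (Complex p.1 p.2)).

From HB Require Import structures.
From mathcomp Require Import all_boot all_order all_algebra.
From mathcomp Require Import all_classical all_reals all_analysis.
From mathcomp Require Import complex.
From mathcomp Require Import measurable_realfun ring.
Set Implicit Arguments.
Unset Strict Implicit.
Unset Printing Implicit Defensive.

Import Order.TTheory GRing.Theory Num.Theory.
Local Open Scope ring_scope.

(* Since x itself is an admissible candidate, the minimiser xh satisfies
   |D - xh xh^H| <= |D - x x^H| pointwise in the Frobenius norm, so
   |xh xh^H - x x^H|^2 <= 2 |xh xh^H - D|^2 + 2 |D - x x^H|^2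
   <= 4 |D - x x^H|^2.  Integrating gives the claim.  The estimator D depends
   on the solution t of T t = T(y) - E T(y), which is not assumed measurable,
   so the integral is compared only through its measurable left-hand side. *)

Lemma ge0_le_integral_nonmeasurable d (T : measurableType d) (R : realType)
    (mu : {measure set T -> \bar R}) (f g : T -> \bar R) :
  (forall x, (0 <= f x)%E) -> (forall x, (f x <= g x)%E) ->
  (\int[mu]_x f x <= \int[mu]_x g x)%E.
Proof.
move=> f0 fg.
have g0 x : (0 <= g x)%E by apply: le_trans (f0 x) (fg x).
rewrite !ge0_integralTE//.
apply: ereal_sup_le => _ [h hf <-]; exists h => //= x.
exact: le_trans (hf x) (fg x).
Qed.

Lemma ge0_le_integralZl_nonmeasurable d (T : measurableType d) (R : realType)
    (mu : {measure set T -> \bar R}) (g h : T -> R) (k : R) :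
  0 < k -> measurable_fun setT g -> (forall x, 0 <= g x) ->
  (forall x, g x <= k * h x) ->
  (\int[mu]_x (g x)%:E <= k%:E * \int[mu]_x (h x)%:E)%E.
Proof.
move=> k0 mg g0 gkh.
have gk0 x : (0 <= (g x / k)%:E)%E by rewrite lee_fin divr_ge0 // ltW.
have mgk : measurable_fun setT (fun x => (g x / k)%:E).
  by apply/measurable_EFinP; apply: measurable_funM.
rewrite (_ : (fun x => (g x)%:E) = fun x => (k%:E * (g x / k)%:E)%E); last first.
  by apply/funext => x; rewrite -EFinM mulrC divfK // gt_eqF.
rewrite ge0_integralZl_EFin //; last exact: ltW.
apply: lee_wpmul2l; first by rewrite lee_fin ltW.
apply: ge0_le_integral_nonmeasurable => // x.
by rewrite lee_fin ler_pdivrMr // mulrC; exact: gkh.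
Qed.

Lemma sqrrD_le2 (R : realDomainType) (a b : R) :
  (a + b) ^+ 2 <= 2 * a ^+ 2 + 2 * b ^+ 2.
Proof.
rewrite -subr_ge0 (_ : _ - _ = (a - b) ^+ 2) ?sqr_ge0 //; ring.
Qed.

Section Frobenius.
Variable R : realType.
Local Notation C := (complex R).

Lemma sqmod_ge0 (u : C) : 0 <= sqmod u.
Proof. by rewrite /sqmod addr_ge0 // sqr_ge0. Qed.

Lemma sqmodN (u : C) : sqmod (- u) = sqmod u.
Proof. by case: u => a b; rewrite /sqmod /= !sqrrN. Qed.

Lemma sqmodD_le2 (u v : C) : sqmod (u + v) <= 2 * sqmod u + 2 * sqmod v.
Proof.
case: u => a b; case: v => a' b'; rewrite /sqmod /=.
by rewrite !mulrDr addrACA lerD // sqrrD_le2.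
Qed.

Lemma frob2_ge0 m n (A : 'M[C]_(m, n)) : 0 <= frob2 A.
Proof. by apply: sumr_ge0 => i _; apply: sumr_ge0 => j _; exact: sqmod_ge0. Qed.

Lemma frob2_subC m n (A B : 'M[C]_(m, n)) : frob2 (A - B) = frob2 (B - A).
Proof.
rewrite /frob2; apply: eq_bigr => i _; apply: eq_bigr => j _.
by rewrite !mxE -opprB sqmodN.
Qed.

Lemma frob2D_le2 m n (A B : 'M[C]_(m, n)) :
  frob2 (A + B) <= 2 * frob2 A + 2 * frob2 B.
Proof.
rewrite /frob2 !mulr_sumr -big_split /=; apply: ler_sum => i _.
rewrite !mulr_sumr -big_split /=; apply: ler_sum => j _.
by rewrite !mxE; exact: sqmodD_le2.
Qed.

Lemma frob2_sub_le4_closer m n (D B X : 'M[C]_(m, n)) :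
  frob2 (D - B) <= frob2 (D - X) -> frob2 (B - X) <= 4 * frob2 (D - X).
Proof.
move=> closer; have := frob2D_le2 (B - D) (D - X).
rewrite addrA subrK => /le_trans; apply.
rewrite frob2_subC (_ : 4 * _ = 2 * frob2 (D - X) + 2 * frob2 (D - X)).
  by rewrite lerD2r ler_wpM2l.
by ring.
Qed.

End Frobenius.

Section ComplexMeasurability.
Variables (R : realType) (d : measure_display) (Omega : measurableType d).
Local Notation C := (complex R).
Implicit Types g h : Omega -> C.

Lemma rvC_sub g h : rvC g -> rvC h -> rvC (fun w => g w - h w).
Proof.
move=> [g1 g2] [h1 h2]; split.
- rewrite (_ : (fun w => _) = fun w => complex.Re (g w) - complex.Re (h w)).
    exact: measurable_funB.
  by apply/funext => w; case: (g w); case: (h w).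
- rewrite (_ : (fun w => _) = fun w => complex.Im (g w) - complex.Im (h w)).
    exact: measurable_funB.
  by apply/funext => w; case: (g w); case: (h w).
Qed.

Lemma rvC_mul g h : rvC g -> rvC h -> rvC (fun w => g w * h w).
Proof.
move=> [g1 g2] [h1 h2]; split.
- rewrite (_ : (fun w => _) = fun w => complex.Re (g w) * complex.Re (h w)
     - complex.Im (g w) * complex.Im (h w)).
    by apply: measurable_funB; apply: measurable_funM.
  by apply/funext => w; case: (g w); case: (h w).
- rewrite (_ : (fun w => _) = fun w => complex.Re (g w) * complex.Im (h w)
     + complex.Im (g w) * complex.Re (h w)).
    by apply: measurable_funD; apply: measurable_funM.
  by apply/funext => w; case: (g w); case: (h w).
Qed.

Lemma rvC_conj g : rvC g -> rvC (fun w => conjc (g w)).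
Proof.
move=> [g1 g2]; split.
- rewrite (_ : (fun w => _) = fun w => complex.Re (g w)) //.
  by apply/funext => w; case: (g w).
- rewrite (_ : (fun w => _) = fun w => - complex.Im (g w)).
    exact: measurableT_comp.
  by apply/funext => w; case: (g w).
Qed.

Lemma measurable_sqmod g : rvC g -> measurable_fun setT (fun w => sqmod (g w)).
Proof. by move=> [g1 g2]; apply: measurable_funD; apply: measurable_funX. Qed.

Lemma rvCmx_sub m n (X Y : Omega -> 'M[C]_(m, n)) :
  rvCmx X -> rvCmx Y -> rvCmx (fun w => X w - Y w).
Proof.
move=> rX rY i j; rewrite (_ : (fun w => _) = fun w => X w i j - Y w i j).
  exact: rvC_sub.
by apply/funext => w; rewrite !mxE.
Qed.

Lemma rvCmx_outer n (a : Omega -> 'cV[C]_n) :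
  rvCmx a -> rvCmx (fun w => outer (a w)).
Proof.
move=> ra i j; rewrite (_ : (fun w => _) = fun w => a w i ord0 * conjc (a w j ord0)).
  by apply: rvC_mul => //; apply: rvC_conj.
by apply/funext => w; rewrite !mxE big_ord1 !mxE.
Qed.

Lemma measurable_frob2 m n (X : Omega -> 'M[C]_(m, n)) :
  rvCmx X -> measurable_fun setT (fun w => frob2 (X w)).
Proof.
move=> rX; apply: measurable_sum => i; apply: measurable_sum => j.
exact: measurable_sqmod.
Qed.

End ComplexMeasurability.

Theorem corollary1 (R : realType) (d : measure_display) (Omega : measurableType d)
    (P : probability Omega R) (realcase : bool) (M N : nat)
    (A : 'M[complex R]_(M, N))
    (x : Omega -> 'cV[complex R]_N) (ez : Omega -> 'cV[complex R]_M)
    (ey : Omega -> 'cV[R]_M)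
    (f : complex R -> R) (Tc : R -> R)
    (t : Omega -> 'cV[R]_M) (xh : Omega -> 'cV[complex R]_N) :
  inHmx realcase A ->
  (forall w, inHmx realcase (x w)) ->
  (forall w, inHmx realcase (ez w)) ->
  rvCmx x -> rvCmx ez -> rvRmx ey ->
  measurable_cplx f -> measurable_fun setT Tc ->
  let y : Omega -> 'cV[R]_M :=
    fun w => \col_m (f ((A *m x w + ez w) m ord0) + ey w m ord0) in
  (forall m : 'I_M, (\int[P]_w ((Tc (y w m ord0)) ^+ 2)%:E < +oo)%E) ->
  (\int[P]_w ((\sum_(i < N) sqmod (x w i ord0)) ^+ 2)%:E < +oo)%E ->
  let Tbar : 'cV[R]_M := \col_m EE P (fun w => Tc (y w m ord0)) in
  let ctr : Omega -> 'cV[R]_M := fun w => \col_m (Tc (y w m ord0) - Tbar m ord0) in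
  let Kx : 'M[complex R]_N := \matrix_(i, j) EC P (fun w => outer (x w) i j) in
  let Tm : 'M[R]_M := \matrix_(i, j) EE P (fun w => ctr w i ord0 * ctr w j ord0) in
  \rank Tm = M ->
  (forall w, Tm *m t w = ctr w) ->
  let V : 'I_M -> 'M[complex R]_N := fun m =>
    \matrix_(i, j) EC P (fun w => (ctr w m ord0)%:C%C * (outer (x w) i j - Kx i j)) in
  let D : Omega -> 'M[complex R]_N := fun w =>
    Kx + \sum_(m < M) (t w m ord0)%:C%C *: V m in
  rvCmx xh ->
  (forall w, inHmx realcase (xh w) /\
     forall xt : 'cV[complex R]_N, inHmx realcase xt ->
       frob2 (D w - outer (xh w)) <= frob2 (D w - outer xt)) ->
  (\int[P]_w (frob2 (outer (xh w) - outer (x w)))%:E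
     <= 4%:E * \int[P]_w (frob2 (D w - outer (x w)))%:E)%E.
Proof.
move=> _ hx _ rx _ _ _ _ y _ _ Tbar ctr Kx Tm _ _ V D rxh hmin.
apply: ge0_le_integralZl_nonmeasurable => // [|w|w].
- by apply: measurable_frob2; apply: rvCmx_sub; apply: rvCmx_outer.
- exact: frob2_ge0.
- apply: frob2_sub_le4_closer.
  by have [_ minimal] := hmin w; exact: minimal (hx w).
Qed.
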